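(* For every $n\in\mathbb{N}$, the operator $W_n$ on $H^2$ is not Li-Yorke chaotic.
   Context: $H^2$ denotes the Hardy space of analytic functions $f(z)=\sum_{k\ge0}\hat f(k)z^k$ on the open unit disk with $\sum_{k}|\hat f(k)|^2<\infty$. For $n\in\mathbb{N}$, $W_n$ is the bounded operator on $H^2$ given by $W_nf(z)=(1+z+\cdots+z^{n-1})f(z^n)$ (so $W_1$ is the identity and $W_mW_n=W_{mn}$). An operator $T$ on a Banach space $Y$ is Li-Yorke chaotic if there is an uncountable set $S\subseteq Y$ such that for all distinct $x,y\in S$, $\liminf_{k\to\infty}\|T^kx-T^ky\|=0$ and $\limsup_{k\to\infty}\|T^kx-T^ky\|=\infty$. *)

From Stdlib Require Import Reals List Arith.
From Coquelicot Require Import Coquelicot.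
Open Scope R_scope.

(* An element f of H^2 is identified with its Taylor coefficient sequence
   (fhat(k))_k; H^2 is the set of square-summable coefficient sequences. *)
Definition in_H2 (a : nat -> C) : Prop :=
  ex_series (fun k => (Cmod (a k)) ^ 2).

Definition H2norm (a : nat -> C) : R :=
  sqrt (Series (fun k => (Cmod (a k)) ^ 2)).

(* Coefficients of f(z^n): coefficient of z^m is fhat(m/n) if n | m, else 0. *)
Definition comp_zn (n : nat) (a : nat -> C) : nat -> C :=
  fun m => if Nat.eqb (Nat.modulo m n) 0%nat then a (Nat.div m n) else 0%C.

(* Coefficients of W_n f = (1 + z + ... + z^(n-1)) f(z^n)  (Cauchy product):
   coefficient of z^m is  sum_{j<n, j<=m} [z^(m-j)] f(z^n). *)
Definition W (n : nat) (a : nat -> C) : nat -> C :=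
  fun m => fold_right Cplus 0%C
             (map (fun j => if Nat.leb j m then comp_zn n a (Nat.sub m j) else 0%C)
                  (seq 0%nat n)).

Definition uncountable {X : Type} (S : X -> Prop) : Prop :=
  ~ exists f : X -> nat, forall x y, S x -> S y -> f x = f y -> x = y.

Definition LiYorke_chaotic (T : (nat -> C) -> (nat -> C)) : Prop :=
  exists S : (nat -> C) -> Prop,
    (forall x, S x -> in_H2 x) /\
    uncountable S /\
    (forall x y, S x -> S y -> x <> y ->
       LimInf_seq (fun k => H2norm (fun m => Cminus (Nat.iter k T x m)
                                                    (Nat.iter k T y m)))
         = Finite 0 /\
       LimSup_seq (fun k => H2norm (fun m => Cminus (Nat.iter k T x m)
                                                    (Nat.iter k T y m)))
         = p_infty).

(* W_n acts on Taylor coefficients by repeating each one n times, so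
   ||W_n f||^2 = n ||f||^2 and ||W_n^k x - W_n^k y|| is nondecreasing in k.
   A nondecreasing sequence has a limit, so its lim inf and lim sup agree and
   cannot be 0 and +oo. *)
From Stdlib Require Import Reals List Arith.
From Coquelicot Require Import Coquelicot.
From Stdlib Require Import Lia Lra Classical.

Open Scope R_scope.

Lemma uncountable_two_points {X : Type} (S : X -> Prop) :
  uncountable S -> exists x y, S x /\ S y /\ x <> y.
Proof.
  intros Hunc. apply NNPP; intros Hsub. apply Hunc.
  exists (fun _ => 0%nat); intros x y Sx Sy _.
  apply NNPP; intros Hxy. apply Hsub. now exists x, y.
Qed.

Lemma fold_right_Cplus_single (g : nat -> C) (r s len : nat) :
  (forall j, j <> r -> (s <= j < s + len)%nat -> g j = 0%C) ->
  fold_right Cplus 0%C (map g (seq s len)) =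
  if ((s <=? r) && (r <? s + len))%bool then g r else 0%C.
Proof.
  revert s; induction len as [|len IH]; intros s Hg; simpl.
  - destruct (s <=? r) eqn:Hsr, (r <? s + 0) eqn:Hrs; try reflexivity.
    apply Nat.leb_le in Hsr; apply Nat.ltb_lt in Hrs; lia.
  - rewrite IH by (intros j Hj Hrange; apply Hg; lia).
    destruct (Nat.eq_dec s r) as [<-|Hsr].
    + rewrite Nat.leb_refl, (proj2 (Nat.ltb_lt s (s + S len))) by lia.
      replace (S s <=? s) with false by (symmetry; apply Nat.leb_gt; lia).
      apply Cplus_0_r.
    + rewrite Hg by lia. rewrite Cplus_0_l.
      destruct (s <=? r) eqn:E1, (S s <=? r) eqn:E2, (r <? s + S len) eqn:E3,
        (r <? S s + len) eqn:E4; simpl; try reflexivity;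
        rewrite ?Nat.leb_le, ?Nat.leb_gt, ?Nat.ltb_lt, ?Nat.ltb_ge in *; lia.
Qed.

Lemma sum_n_stretch (n : nat) (a : nat -> R) (N : nat) : (0 < n)%nat ->
  sum_n (fun m => a (m / n)%nat) (n * N + (n - 1)) = INR n * sum_n a N.
Proof.
  intros hn. induction N as [|N IH].
  - unfold sum_n. rewrite sum_n_n, Nat.mul_0_r, Nat.add_0_l.
    rewrite (sum_n_m_ext_loc _ (fun _ => a 0%nat)), sum_n_m_const.
    + f_equal. f_equal. lia.
    + intros k Hk. now rewrite Nat.div_small by lia.
  - rewrite sum_Sn. unfold plus; simpl. rewrite Rmult_plus_distr_l, <- IH.
    unfold sum_n. rewrite (sum_n_m_Chasles _ 0 (n * N + (n - 1))) by lia.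
    rewrite (sum_n_m_ext_loc _ (fun _ => a (S N)) (S (n * N + (n - 1)))), sum_n_m_const.
    + replace (S (n * S N + (n - 1)) - S (n * N + (n - 1)))%nat with n by lia.
      reflexivity.
    + intros k Hk. f_equal. symmetry. apply (Nat.div_unique k n (S N) (k - n * S N)); lia.
Qed.

(* The partial sums are nondecreasing and, along N |-> n N + n - 1, equal n times
   those of a. *)
Lemma is_series_stretch (n : nat) (a : nat -> R) (l : R) :
  (0 < n)%nat -> (forall m, 0 <= a m) -> is_series a l ->
  is_series (fun m => a (m / n)%nat) (INR n * l).
Proof.
  intros hn Ha Hl.
  set (c := fun m => a (m / n)%nat).
  set (phi := fun N => (n * N + (n - 1))%nat).
  assert (Hincr : forall N, sum_n c N <= sum_n c (S N)).
  { intros N. rewrite sum_Sn. unfold plus; simpl. specialize (Ha (S N / n)%nat). unfold c. lra. }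
  assert (Hc := Lim_seq_correct _ (ex_lim_seq_incr _ Hincr)).
  assert (Hphi : filterlim phi eventually eventually)
    by (apply eventually_subseq; intros N; unfold phi; lia).
  assert (Hsub : is_lim_seq (fun N => sum_n c (phi N)) (INR n * l)).
  { apply (is_lim_seq_ext (fun N => INR n * sum_n a N)).
    - intros N. symmetry. apply sum_n_stretch, hn.
    - apply (is_lim_seq_scal_l _ _ l), Hl. }
  apply is_lim_seq_unique in Hsub.
  rewrite (Lim_seq_subseq _ _ Hphi (ex_lim_seq_incr _ Hincr)) in Hsub.
  rewrite Hsub in Hc. exact Hc.
Qed.

Lemma Cmod_sub_sqr_le (u v : C) :
  Cmod (Cminus u v) ^ 2 <= 2 * Cmod u ^ 2 + 2 * Cmod v ^ 2.
Proof.
  assert (Htri : Cmod (Cminus u v) <= Cmod u + Cmod v).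
  { unfold Cminus. rewrite <- (Cmod_opp v). apply Cmod_triangle. }
  pose proof (Cmod_ge_0 (Cminus u v)).
  pose proof (pow_incr _ _ 2 (conj (Cmod_ge_0 _) Htri)).
  pose proof (pow2_ge_0 (Cmod u - Cmod v)).
  nra.
Qed.

Lemma H2norm_ext (a b : nat -> C) :
  (forall m, a m = b m) -> H2norm a = H2norm b.
Proof.
  intros Hab. unfold H2norm. f_equal. apply Series_ext. intros m. now rewrite Hab.
Qed.

Lemma in_H2_sub (x y : nat -> C) :
  in_H2 x -> in_H2 y -> in_H2 (fun m => Cminus (x m) (y m)).
Proof.
  intros Hx Hy.
  apply (@ex_series_le R_AbsRing R_CompleteNormedModule _
    (fun m => 2 * Cmod (x m) ^ 2 + 2 * Cmod (y m) ^ 2)).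
  - intros m. change (norm ?r) with (Rabs r).
    rewrite Rabs_pos_eq by apply pow2_ge_0. apply Cmod_sub_sqr_le.
  - apply (ex_series_plus (fun m => 2 * Cmod (x m) ^ 2) (fun m => 2 * Cmod (y m) ^ 2)).
    + exact (@ex_series_scal_l R_AbsRing R_NormedModule 2 _ Hx).
    + exact (@ex_series_scal_l R_AbsRing R_NormedModule 2 _ Hy).
Qed.

Lemma comp_zn_mul (n q : nat) (a : nat -> C) :
  n <> 0%nat -> comp_zn n a (q * n) = a q.
Proof.
  intros hn. unfold comp_zn.
  now rewrite Nat.Div0.mod_mul, Nat.div_mul.
Qed.

Lemma comp_zn_not_dvd (n m : nat) (a : nat -> C) :
  (m mod n <> 0)%nat -> comp_zn n a m = 0%C.
Proof.
  intros Hm. unfold comp_zn.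
  now rewrite (proj2 (Nat.eqb_neq _ _) Hm).
Qed.

(* Only the term j = m mod n of the Cauchy product survives. *)
Lemma W_apply (n : nat) (a : nat -> C) (m : nat) :
  (0 < n)%nat -> W n a m = a (m / n)%nat.
Proof.
  intros hn. unfold W.
  assert (Hdiv := Nat.div_mod_eq m n).
  assert (Hrem := Nat.mod_upper_bound m n ltac:(lia)).
  rewrite (fold_right_Cplus_single _ (m mod n)).
  - rewrite (proj2 (Nat.ltb_lt (m mod n) (0 + n))), (proj2 (Nat.leb_le (m mod n) m))
      by lia.
    replace (m - m mod n)%nat with (m / n * n)%nat by lia.
    apply comp_zn_mul; lia.
  - intros j Hj Hrange.
    destruct (j <=? m) eqn:Hjm; [|reflexivity].
    apply Nat.leb_le in Hjm. apply comp_zn_not_dvd. intros Hdvd.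
    apply (Nat.Div0.mod_divides (m - j) n) in Hdvd as [q Hq].
    apply Hj, (Nat.mod_unique m n q j); lia.
Qed.

Lemma iter_W_sub (n k : nat) (x y : nat -> C) (m : nat) : (0 < n)%nat ->
  Cminus (Nat.iter k (W n) x m) (Nat.iter k (W n) y m) =
  Nat.iter k (W n) (fun i => Cminus (x i) (y i)) m.
Proof.
  intros hn. revert m; induction k as [|k IH]; intros m; [reflexivity|].
  rewrite !Nat.iter_succ, !W_apply by exact hn. apply IH.
Qed.

Lemma is_series_W (n : nat) (a : nat -> C) : (0 < n)%nat -> in_H2 a ->
  is_series (fun m => Cmod (W n a m) ^ 2)
    (INR n * Series (fun m => Cmod (a m) ^ 2)).
Proof.
  intros hn Ha.
  apply (is_series_ext (fun m => Cmod (a (m / n)%nat) ^ 2)).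
  - intros m. now rewrite W_apply.
  - apply (is_series_stretch n (fun k => Cmod (a k) ^ 2)); [exact hn | |].
    + intros m; apply pow2_ge_0.
    + apply Series_correct, Ha.
Qed.

Lemma in_H2_W (n : nat) (a : nat -> C) : (0 < n)%nat -> in_H2 a -> in_H2 (W n a).
Proof. intros hn Ha. exact (ex_intro _ _ (is_series_W n a hn Ha)). Qed.

Lemma H2norm_W (n : nat) (a : nat -> C) : (0 < n)%nat -> in_H2 a ->
  H2norm (W n a) = sqrt (INR n) * H2norm a.
Proof.
  intros hn Ha. unfold H2norm.
  rewrite (is_series_unique _ _ (is_series_W n a hn Ha)).
  apply sqrt_mult_alt, pos_INR.
Qed.

Lemma H2norm_le_W (n : nat) (a : nat -> C) : (0 < n)%nat -> in_H2 a ->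
  H2norm a <= H2norm (W n a).
Proof.
  intros hn Ha. rewrite H2norm_W by assumption.
  assert (1 <= sqrt (INR n)).
  { rewrite <- sqrt_1. apply sqrt_le_1_alt. apply (le_INR 1); lia. }
  assert (0 <= H2norm a) by apply sqrt_pos.
  nra.
Qed.

Theorem mainTheorem4 : forall n : nat, (0 < n)%nat -> ~ LiYorke_chaotic (W n).
Proof.
  intros n hn [A [HA [Hunc Hchaos]]].
  destruct (uncountable_two_points A Hunc) as (x & y & Ax & Ay & Hxy).
  destruct (Hchaos x y Ax Ay Hxy) as [Hinf Hsup].
  set (d := fun m => Cminus (x m) (y m)).
  assert (Hd : forall k, in_H2 (Nat.iter k (W n) d)).
  { induction k as [|k IH]; [exact (in_H2_sub x y (HA x Ax) (HA y Ay))|].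
    rewrite Nat.iter_succ. now apply in_H2_W. }
  set (u := fun k => H2norm (fun m => Cminus (Nat.iter k (W n) x m) (Nat.iter k (W n) y m))).
  assert (Hu : forall k, u k = H2norm (Nat.iter k (W n) d))
    by (intros k; apply H2norm_ext; intros m; now apply iter_W_sub).
  assert (Hmono : forall k, u k <= u (S k)).
  { intros k. rewrite !Hu, Nat.iter_succ. now apply H2norm_le_W. }
  pose proof (proj1 (ex_lim_LimSup_LimInf_seq u) (ex_lim_seq_incr u Hmono)) as Hlim.
  unfold u in Hlim. rewrite Hinf, Hsup in Hlim. discriminate.
Qed.
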